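(* Let $T$ be a finite tree and let $M$ be a minimal dominating set of $T$ with $|M|=\Gamma(T)$. Then (i) $|a_1(M)|=|N_1(M)|$; (ii) for every $X\subseteq N_2(M)$, $|X|\le |N(X)\cap a_2(M)|$.
   Context: A dominating set of a graph $G=(V,E)$ is a set $S\subseteq V$ such that every vertex is in $S$ or adjacent to a vertex of $S$; it is minimal if no proper subset is dominating. $\Gamma(T)$ is the maximum size of a minimal dominating set of $T$. $N[u]=N(u)\cup\{u\}$; $N(X)=\bigcup_{x\in X}N(x)$. For a dominating set $S$: $a(S)=\{u\in S: S\setminus\{u\}\text{ is not dominating}\}$; $N_1(S)=\{u\in V\setminus S: |N[u]\cap S|=1\}$; $N_2(S)=\{u\in V\setminus S: |N[u]\cap S|\ge 2\}$; $a_1(S)=\{u\in a(S): N[u]\cap N_1(S)\ne\emptyset\}$; $a_2(S)=\{u\in a(S): N[u]\cap N_1(S)=\emptyset\}$. *)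

From mathcomp Require Import all_boot.
Set Implicit Arguments. Unset Strict Implicit. Unset Printing Implicit Defensive.

Section Graph.
Variables (T : finType) (e : rel T).

Definition simple_graph : Prop := symmetric e /\ irreflexive e.

Definition connected_graph : Prop := forall x y : T, connect e x y.

Definition acyclic_graph : Prop :=
  forall c : seq T, uniq c -> 3 <= size c -> ~~ cycle e c.

Definition is_tree : Prop :=
  [/\ simple_graph, connected_graph & acyclic_graph].

Definition opnbhd (u : T) : {set T} := [set v | e u v].
Definition clnbhd (u : T) : {set T} := [set v | (v == u) || e u v].
Definition opnbhdS (X : {set T}) : {set T} := \bigcup_(x in X) opnbhd x.

Definition dominating (S : {set T}) : bool :=
  [forall v, [exists u in S, v \in clnbhd u]].

Definition minimal_dominating (S : {set T}) : bool :=
  dominating S && [forall S' : {set T}, (S' \proper S) ==> ~~ dominating S'].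

Definition Gamma : nat := \max_(S : {set T} | minimal_dominating S) #|S|.

Definition aS (S : {set T}) : {set T} := [set u in S | ~~ dominating (S :\ u)].
Definition N1 (S : {set T}) : {set T} :=
  [set u in ~: S | #|clnbhd u :&: S| == 1].
Definition N2 (S : {set T}) : {set T} :=
  [set u in ~: S | 2 <= #|clnbhd u :&: S|].
Definition a1 (S : {set T}) : {set T} :=
  [set u in aS S | clnbhd u :&: N1 S != set0].
Definition a2 (S : {set T}) : {set T} :=
  [set u in aS S | clnbhd u :&: N1 S == set0].

End Graph.

From mathcomp Require Import all_boot zify.
Set Implicit Arguments. Unset Strict Implicit. Unset Printing Implicit Defensive.

(* A tree is bipartite; fix a colour class C. In a minimal dominating set S,
   a vertex of a2(S) can only be its own private neighbour, so it has no
   neighbour in S or N1(S). Hence for Y inside C and outside S and N1(S), the set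
   (S ∩ C) ∪ (N1(S) ∩ C) ∪ Y ∪ ((a2(S) \ C) \ N(Y)) is independent; extended to a
   maximal independent set, which is minimal dominating, it has at most
   Γ = |S| elements. As S \ C splits into a1(S) \ C and a2(S) \ C, and the unique
   dominator of a vertex of N1(S) ∩ C maps that set onto a1(S) \ C, this yields
   |N1(S) ∩ C| = |a1(S) \ C| (take Y = ∅) and |Y| <= |N(Y) ∩ a2(S)|. Summing over
   both colour classes gives (i) and (ii). *)

Lemma cardsU_disjoint (T : finType) (A B : {set T}) :
  [disjoint A & B] -> #|A :|: B| = #|A| + #|B|.
Proof. by move=> dAB; apply/eqP; rewrite (leq_card_setU A B).2. Qed.

Lemma not_uniq_split (T : eqType) (s : seq T) :
  ~~ uniq s -> exists p1 x p2 p3, s = p1 ++ x :: p2 ++ x :: p3.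
Proof.
elim: s => //= y s IHs /nandP [/negbNE ys | /IHs [p1 [x [p2 [p3 ->]]]]].
  by case/splitPr: ys => p2 p3; exists [::], y, p2, p3.
by exists (y :: p1), x, p2, p3.
Qed.

Section Bipartite.
Variables (T : finType) (e : rel T).
Hypotheses (e_sym : symmetric e) (e_irr : irreflexive e).

Definition bipartition (C : {set T}) : Prop :=
  forall x y, e x y -> (x \in C) != (y \in C).

Lemma bipartitionC C : bipartition C -> bipartition (~: C).
Proof. by move=> bipC x y /bipC; rewrite !inE; case: (x \in C); case: (y \in C). Qed.

Lemma acyclic_closed_walk_even (c : seq T) :
  acyclic_graph e -> cycle e c -> ~~ odd (size c).
Proof.
move=> acyc; have [n] := ubnP (size c); elim: n c => // n IHn c.
rewrite ltnS => size_c walk_c; apply/negP => odd_c.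
have [uniq_c | /not_uniq_split [p1 [x [p2 [p3 Ec]]]]] := boolP (uniq c).
  have size3 : 3 <= size c.
    case: c uniq_c walk_c odd_c {size_c} => [|x [|y [|z c]]] //= _.
    by rewrite e_irr.
  by have /negP := acyc c uniq_c size3.
(* rotating the closed walk at the repeated vertex x splits it into two closed walks *)
have : cycle e (x :: p2 ++ x :: p3 ++ p1).
  by move: walk_c; rewrite -(rot_cycle (size p1)) Ec rot_size_cat /= -catA.
rewrite /= rcons_path cat_path /= => /andP [/andP [walk2 /andP [e2 walk31]] e31].
have cycle2 : cycle e (x :: p2) by rewrite /= rcons_path walk2 e2.
have cycle31 : cycle e (x :: p3 ++ p1).
  by rewrite /= rcons_path walk31; rewrite last_cat /= in e31 *.
have size_split : size c = (size (x :: p2) + size (x :: p3 ++ p1))%N.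
  by rewrite Ec /= !size_cat /= !size_cat /=; lia.
have lt2 : size (x :: p2) < n by move: size_c; rewrite size_split /=; lia.
have lt31 : size (x :: p3 ++ p1) < n by move: size_c; rewrite size_split /=; lia.
move: odd_c; rewrite size_split oddD.
by case: (boolP (odd _)) (IHn _ lt2 cycle2) (IHn _ lt31 cycle31) => // _ _ /negbTE ->.
Qed.

Lemma acyclic_bipartition : acyclic_graph e -> exists C : {set T}, bipartition C.
Proof.
move=> acyc; have connect_e := sym_connect_sym e_sym.
have walk x : exists p, path e (root e x) p && (last (root e x) p == x).
  have /connectP [p walk_p last_p] : connect e (root e x) x.
    by rewrite connect_e connect_root.
  by exists p; rewrite walk_p -last_p eqxx.
pose parity x := odd (size (xchoose (walk x))).
exists [set x | parity x] => x y exy; rewrite !inE.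
have := xchooseP (walk x); have := xchooseP (walk y); rewrite /parity.
set px := xchoose (walk x); set py := xchoose (walk y).
rewrite -(rootP connect_e (connect1 exy)).
move=> /andP [walk_y /eqP last_y] /andP [walk_x /eqP last_x].
apply/negP => /eqP parity_xy.
(* root -> x -> y -> root is a closed walk of odd length if x and y have the same parity *)
have : cycle e (root e x :: px ++ rev py).
  rewrite /= -cats1 -catA cats1 -rev_cons lastI rev_rcons cat_path walk_x /=.
  rewrite last_x last_y exy /=.
  by rewrite -{1}last_y rev_path (@eq_path _ _ e) // => a b; rewrite e_sym.
move/(acyclic_closed_walk_even acyc).
by rewrite /= size_cat size_rev oddD parity_xy addbb.
Qed.

End Bipartite.

Section Neighbourhoods.
Variables (T : finType) (e : rel T).
Hypothesis e_sym : symmetric e.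

Lemma in_clnbhdC u v : (u \in clnbhd e v) = (v \in clnbhd e u).
Proof. by rewrite !inE eq_sym e_sym. Qed.

Lemma opnbhdSP (X : {set T}) v :
  reflect (exists2 x, x \in X & e x v) (v \in opnbhdS e X).
Proof. by apply: (iffP bigcupP) => -[x xX xv]; exists x; rewrite // inE in xv *. Qed.

Lemma opnbhdSS (X Y : {set T}) : X \subset Y -> opnbhdS e X \subset opnbhdS e Y.
Proof.
move=> sXY; apply/subsetP => v /opnbhdSP [x xX exv].
by apply/opnbhdSP; exists x; first exact: subsetP sXY x xX.
Qed.

Lemma opnbhdS_bipartition (C X : {set T}) :
  bipartition e C -> X \subset C -> opnbhdS e X \subset ~: C.
Proof.
move=> bipC sXC; apply/subsetP => v /opnbhdSP [x xX exv].
by move: (bipC _ _ exv); rewrite inE (subsetP sXC x xX); case: (v \in C).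
Qed.

End Neighbourhoods.

Section Stable.
Variables (T : finType) (e : rel T).
Hypotheses (e_sym : symmetric e) (e_irr : irreflexive e).

Definition stable (A : {set T}) : bool := [forall x in A, forall y in A, ~~ e x y].

Lemma stableP (A : {set T}) : reflect {in A &, forall x y, ~~ e x y} (stable A).
Proof.
apply: (iffP forall_inP) => [stA x y xA | stA x xA]; first exact: (forall_inP (stA x xA)).
by apply/forall_inP => y; apply: stA.
Qed.

Lemma maxset_stable_dominating (A : {set T}) : maxset stable A -> dominating e A.
Proof.
case/maxsetP => stA maxA; apply/forallP => v; apply: contraT => v_undominated.
have vNA : v \notin A.
  by apply: contra v_undominated => vA; apply/exists_inP; exists v; rewrite // inE eqxx.
have no_edge u : u \in A -> ~~ e u v.
  move=> uA; apply: contra v_undominated => euv.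
  by apply/exists_inP; exists u; rewrite // inE euv orbT.
have stvA : stable (v |: A).
  apply/stableP => x y; rewrite !inE => /predU1P [-> | xA] /predU1P [-> | yA].
  - by rewrite e_irr.
  - by rewrite e_sym no_edge.
  - exact: no_edge.
  - exact: (stableP _ stA).
by move: vNA; rewrite -(maxA _ stvA (subsetUr _ _)) setU11.
Qed.

Lemma stable_dominating_minimal (A : {set T}) :
  stable A -> dominating e A -> minimal_dominating e A.
Proof.
move=> /stableP stA domA; rewrite /minimal_dominating domA.
apply/forallP => B; apply/implyP => /properP [sBA [a aA aNB]].
apply/negP => /forallP /(_ a) /exists_inP [u uB]; rewrite inE => /predU1P [au | eua].
  by move: aNB; rewrite au uB.
by move: (stA u a (subsetP sBA u uB) aA); rewrite eua.
Qed.

Lemma stable_card_le_Gamma (A : {set T}) : stable A -> #|A| <= Gamma e.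
Proof.
move=> stA; have [B maxB sAB] := maxset_exists stA.
apply: leq_trans (subset_leq_card sAB) _.
apply: (leq_bigmax_cond B); apply: stable_dominating_minimal.
- by case/maxsetP: maxB.
- exact: maxset_stable_dominating.
Qed.

End Stable.

Section Domination.
Variables (T : finType) (e : rel T).
Hypotheses (e_sym : symmetric e) (e_irr : irreflexive e).
Variable S : {set T}.

Lemma disjoint_N1 : [disjoint N1 e S & S].
Proof. by rewrite disjoints_subset; apply/subsetP => v; rewrite inE => /andP []. Qed.

Lemma disjoint_N2 : [disjoint N2 e S & S :|: N1 e S].
Proof.
rewrite disjoints_subset; apply/subsetP => v; rewrite !inE negb_or.
by case/andP => -> /=; case: eqP => // ->.
Qed.

Definition dominator (v : T) : T := odflt v [pick u in clnbhd e v :&: S].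

Lemma N1_clnbhdI v : v \in N1 e S -> clnbhd e v :&: S = [set dominator v].
Proof.
rewrite inE => /andP [_ /cards1P [u Eu]]; rewrite /dominator Eu.
by case: pickP => [u' /set1P -> | /(_ u)]; rewrite ?set11.
Qed.

Lemma a1D_sub_dominator C :
  bipartition e C -> a1 e S :\: C \subset dominator @: (N1 e S :&: C).
Proof.
move=> bipC; apply/subsetP => u; rewrite !inE => /and3P [uNC /andP [uS _]].
case/set0Pn => v /setIP [vu vN1].
have vNu : v != u by apply: contraTneq uS => <-; rewrite (disjointFr disjoint_N1 vN1).
have euv : e u v by move: vu; rewrite inE (negbTE vNu).
apply/imsetP; exists v.
  by move: (bipC _ _ euv); rewrite inE vN1 (negbTE uNC); case: (v \in C).
by apply/set1P; rewrite -N1_clnbhdI // inE uS in_clnbhdC // vu.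
Qed.

Lemma card_a1D_le_N1I C : bipartition e C -> #|a1 e S :\: C| <= #|N1 e S :&: C|.
Proof.
move=> bipC; apply: leq_trans (subset_leq_card (a1D_sub_dominator bipC)) _.
exact: leq_imset_card.
Qed.

Hypothesis S_min : minimal_dominating e S.

Lemma aS_minimal : aS e S = S.
Proof.
apply/setP => u; rewrite inE; apply/andb_idr => uS.
by case/andP: S_min => _ /forallP /(_ (S :\ u)); rewrite properD1.
Qed.

Lemma card_a1_a2D C : #|S :\: C| = #|a1 e S :\: C| + #|a2 e S :\: C|.
Proof.
have {1}<- : a1 e S :|: a2 e S = S.
  by apply/setP => u; rewrite /a1 /a2 aS_minimal !inE; case: (u \in S); case: (_ == _).
rewrite setDUl cardsU; suff -> : (a1 e S :\: C) :&: (a2 e S :\: C) = set0.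
  by rewrite cards0 subn0.
by apply/setP => u; rewrite !inE; case: (_ == set0); rewrite !andbF.
Qed.

Lemma minimal_dominating_private u : u \in S ->
  exists2 w, w \in clnbhd e u & forall u', u' \in S -> w \in clnbhd e u' -> u' = u.
Proof.
move=> uS; case/andP: S_min => domS /forallP /(_ (S :\ u)).
rewrite properD1 //= => /forallPn [w /exists_inPn w_undominated].
have /exists_inP [u0 u0S wu0] := forallP domS w.
have priv u' : u' \in S -> w \in clnbhd e u' -> u' = u.
  move=> u'S; apply: contraTeq => u'Nu.
  by apply: w_undominated; rewrite !inE u'Nu u'S.
by exists w => //; rewrite -(priv u0).
Qed.

Lemma a2_isolated y z : y \in a2 e S -> z \in S :|: N1 e S -> ~~ e y z.
Proof.
rewrite inE aS_minimal => /andP [yS no_N1].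
have [w wy w_priv] := minimal_dominating_private yS.
(* a private neighbour of y other than y itself would lie in N1 next to y *)
have wy_eq : w = y.
  apply: contraTeq no_N1 => wNy; apply/set0Pn; exists w; rewrite inE wy /=.
  have wNS : w \notin S by apply: contra wNy => wS; rewrite (w_priv w wS) ?inE ?eqxx.
  rewrite inE inE wNS /=; apply/cards1P; exists y; apply/setP => v.
  rewrite in_setI in_set1; apply/andP/eqP => [[wv vS] | ->].
    by apply: w_priv => //; rewrite in_clnbhdC.
  by rewrite yS in_clnbhdC // wy.
move: w_priv; rewrite {w wy}wy_eq => y_priv.
case/setUP => [zS | zN1]; apply/negP => eyz.
  have zy : z = y by apply: y_priv; rewrite // inE e_sym eyz orbT.
  by move: eyz; rewrite zy e_irr.
by move/eqP/setP: no_N1 => /(_ z); rewrite in_setI zN1 andbT in_set0 inE eyz orbT.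
Qed.

Hypothesis S_Gamma : #|S| = Gamma e.

Section ColourClass.
Variable C : {set T}.
Hypothesis bipC : bipartition e C.

Lemma card_N1I_add_le (Y : {set T}) : Y \subset C -> [disjoint Y & S :|: N1 e S] ->
  #|N1 e S :&: C| + #|Y| <= #|a1 e S :\: C| + #|(a2 e S :\: C) :&: opnbhdS e Y|.
Proof.
move=> sYC disjY.
(* P ∪ Q is stable: P lies in the class C, and vertices of Q lie in a2(S) outside N(Y) *)
set P := (S :&: C :|: N1 e S :&: C) :|: Y.
set Q := (a2 e S :\: C) :\: opnbhdS e Y.
have sPC : P \subset C by rewrite !subUset !subsetIr sYC.
have sQCC : Q \subset ~: C by apply/subsetP => x /setDP [/setDP [_ xNC] _]; rewrite inE.
have Q_isolated x y : x \in Q -> y \in P :|: Q -> ~~ e x y.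
  case/setDP => /setDP [xa2 _] xNY yPQ.
  have [yY | yNY] := boolP (y \in Y).
    by apply: contra xNY => exy; apply/opnbhdSP; exists y; rewrite // e_sym.
  apply: a2_isolated xa2 _; rewrite inE.
  case/setUP: yPQ => [/setUP [/setUP [] /setIP [-> _] | yY] | /setDP [/setDP [ya2 _] _]].
  - by [].
  - by rewrite orbT.
  - by rewrite yY in yNY.
  - by move: ya2; rewrite inE aS_minimal => /andP [->].
have stI : stable e (P :|: Q).
  apply/stableP => x y /setUP [xP | xQ]; last exact: Q_isolated.
  case/setUP => [yP | yQ]; last by rewrite e_sym Q_isolated // inE xP.
  by apply/negP => /bipC; rewrite (subsetP sPC x xP) (subsetP sPC y yP).
have cardI : #|P :|: Q| = #|S :&: C| + #|N1 e S :&: C| + #|Y| + #|Q|.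
  rewrite !cardsU_disjoint //.
  - by apply: disjointW (subsetIl _ _) (subsetIl _ _) _; rewrite disjoint_sym disjoint_N1.
  - rewrite disjoint_sym; apply: disjointWr disjY.
    by apply: setUSS; apply: subsetIl.
  - by apply: disjointWl sPC _; rewrite disjoints_subset -[C]setCK setCS.
have := stable_card_le_Gamma e_sym e_irr stI.
rewrite -S_Gamma cardI -(cardsID C S) card_a1_a2D -(cardsID (opnbhdS e Y) (a2 e S :\: C)) -/Q.
lia.
Qed.

Lemma card_a1D_eq_N1I : #|a1 e S :\: C| = #|N1 e S :&: C|.
Proof.
apply/eqP; rewrite eqn_leq card_a1D_le_N1I //=.
have := card_N1I_add_le (sub0set C) _.
rewrite /opnbhdS big_set0 setI0 !cards0 !addn0; apply.
by rewrite -setI_eq0 set0I.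
Qed.

Lemma card_le_nbhd_a2 (Y : {set T}) : Y \subset C -> [disjoint Y & S :|: N1 e S] ->
  #|Y| <= #|opnbhdS e Y :&: a2 e S|.
Proof.
move=> sYC disjY.
have := card_N1I_add_le sYC disjY; have := card_a1D_le_N1I bipC.
have : #|(a2 e S :\: C) :&: opnbhdS e Y| <= #|opnbhdS e Y :&: a2 e S|.
  by apply: subset_leq_card; rewrite setIC setIS // subsetDl.
lia.
Qed.

End ColourClass.

Lemma card_a1_eq_N1 C : bipartition e C -> #|a1 e S| = #|N1 e S|.
Proof.
move=> bipC; have eqC := card_a1D_eq_N1I bipC.
have := card_a1D_eq_N1I (bipartitionC bipC); rewrite setDE setCK -setDE => eqCC.
by rewrite -(cardsID C (a1 e S)) -(cardsID C (N1 e S)) eqC eqCC addnC.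
Qed.

Lemma card_N2_le_nbhd_a2 C (X : {set T}) : bipartition e C -> X \subset N2 e S ->
  #|X| <= #|opnbhdS e X :&: a2 e S|.
Proof.
move=> bipC sXN2; have disjX := disjointWl sXN2 disjoint_N2.
have bipCC := bipartitionC bipC.
have leC := card_le_nbhd_a2 bipC (subsetIr X C) (disjointWl (subsetIl _ _) disjX).
have leCC := card_le_nbhd_a2 bipCC (subsetIr X (~: C)) (disjointWl (subsetIl _ _) disjX).
have disjN : [disjoint opnbhdS e (X :&: C) & opnbhdS e (X :&: ~: C)].
  rewrite disjoints_subset; apply: subset_trans (opnbhdS_bipartition bipC (subsetIr _ _)) _.
  by rewrite setCS -{2}[C]setCK opnbhdS_bipartition // subsetIr.
rewrite -(cardsID C X) setDE; apply: leq_trans (leq_add leC leCC) _.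
rewrite -cardsU_disjoint; last exact: disjointW (subsetIl _ _) (subsetIl _ _) disjN.
by apply: subset_leq_card; rewrite -setIUl setSI // subUset !opnbhdSS ?subsetIl.
Qed.

End Domination.

Theorem theorem4p7 (T : finType) (e : rel T) (M : {set T}) :
  is_tree e ->
  minimal_dominating e M ->
  #|M| = Gamma e ->
  #|a1 e M| = #|N1 e M| /\
  (forall X : {set T}, X \subset N2 e M ->
     #|X| <= #|opnbhdS e X :&: a2 e M|).
Proof.
move=> [[e_sym e_irr] _ e_acyc] M_min M_Gamma.
have [C bipC] := acyclic_bipartition e_sym e_irr e_acyc.
split; first exact: (card_a1_eq_N1 e_sym e_irr M_min M_Gamma bipC).
by move=> X; apply: (card_N2_le_nbhd_a2 e_sym e_irr M_min M_Gamma bipC).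
Qed.
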